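(* Consider the following $n$-round process. In each round $i$, an adversary chooses $p_i\in[0,1]$, possibly depending on the outcomes of the first $i-1$ rounds, and then a coin with heads probability $p_i$ is tossed. Let $Z_i$ be the indicator of the event that no coin comes up heads in the first $i$ rounds (rounds $1,\dots,i$), and let $Y=\sum_{i=1}^n p_iZ_i$. Then for every real $q$ and every adversary strategy, $\Pr[Y>q]\le\exp(-q)$. *)

From HB Require Import structures.
From mathcomp Require Import all_boot all_order all_algebra.
From mathcomp Require Import all_classical all_reals all_analysis.
Set Implicit Arguments. Unset Strict Implicit. Unset Printing Implicit Defensive.
Import Order.TTheory GRing.Theory Num.Theory.
Local Open Scope ring_scope.

(* An adversary strategy maps the history (outcomes of previous rounds,
   true = heads) to the heads probability of the next coin. *)
Definition strategy (R : realType) := seq bool -> R.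

Definition valid_strategy (R : realType) (s : strategy R) : Prop :=
  forall h : seq bool, 0 <= s h <= 1.

Definition round_prob (R : realType) (n : nat) (s : strategy R)
  (w : n.-tuple bool) (i : 'I_n) : R := s (take i w).

Definition outcome_prob (R : realType) (n : nat) (s : strategy R)
  (w : n.-tuple bool) : R :=
  \prod_(i < n) (if tnth w i then round_prob s w i else 1 - round_prob s w i).

(* Z_i: no head among the first i+1 rounds (rounds 0..i, 0-indexed) *)
Definition Zind (n : nat) (w : n.-tuple bool) (i : 'I_n) : bool :=
  all (fun b => ~~ b) (take i.+1 w).

Definition Yval (R : realType) (n : nat) (s : strategy R) (w : n.-tuple bool) : R :=
  \sum_(i < n) round_prob s w i * (Zind w i)%:R.

Definition prob_Y_gt (R : realType) (n : nat) (s : strategy R) (q : R) : R :=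
  \sum_(w : n.-tuple bool | q < Yval s w) outcome_prob s w.

From HB Require Import structures.
From mathcomp Require Import all_boot all_order all_algebra.
From mathcomp Require Import all_classical all_reals all_analysis.
Import Order.TTheory GRing.Theory Num.Theory.
Local Open Scope ring_scope.

(* Induction on the number of rounds, conditioning on the first coin.  For
   q >= 0 a first head makes Y = 0 <= q, while after a first tail
   Y = p_1 + Y', where Y' is the same quantity for the adversary that
   continues after the tail.  Hence
   Pr[Y > q] <= (1 - p_1) exp(p_1 - q) <= exp(-q), using 1 - p <= exp(-p).
   For q < 0 the bound exceeds 1. *)

Lemma big_tuple_cons (T : finType) (V : nmodType) n (F : n.+1.-tuple T -> V) :
  \sum_(w : n.+1.-tuple T) F w = \sum_(t : T) \sum_(w : n.-tuple T) F [tuple of t :: w].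
Proof.
rewrite pair_big /=.
rewrite (reindex (fun p : T * n.-tuple T => [tuple of p.1 :: p.2])) //=.
exists (fun w : n.+1.-tuple T => (thead w, [tuple of behead w])).
  by move=> [t w] _ /=; congr pair; apply: val_inj.
by move=> w _; rewrite [in RHS](tuple_eta w).
Qed.

Lemma mul1B_expR_le1 (R : realType) (x : R) : (1 - x) * expR x <= 1.
Proof.
rewrite -[leRHS](expR0 R) -(addNr x) expRD ler_wpM2r ?expR_ge0 //.
exact: expR_ge1Dx.
Qed.

Section Adversary.
Context {R : realType}.
Implicit Types (s : strategy R) (b : bool) (q : R).

Definition strategy_after s b : strategy R := fun h => s (b :: h).

Lemma valid_strategy_after s b :
  valid_strategy s -> valid_strategy (strategy_after s b).
Proof. by move=> hs h; apply: hs. Qed.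

Lemma Yval_cons n s b (w : n.-tuple bool) :
  Yval s [tuple of b :: w] = if b then 0 else s [::] + Yval (strategy_after s b) w.
Proof.
rewrite /Yval big_ord_recl /round_prob /Zind /=.
case: b => /=; last by rewrite take0 mulr1.
by rewrite mulr0 add0r big1 // => i _; rewrite mulr0.
Qed.

Lemma outcome_prob_cons n s b (w : n.-tuple bool) :
  outcome_prob s [tuple of b :: w] =
  (if b then s [::] else 1 - s [::]) * outcome_prob (strategy_after s b) w.
Proof.
rewrite /outcome_prob big_ord_recl tnth0 /round_prob /=; congr (_ * _).
by apply: eq_bigr => i _; rewrite tnthS.
Qed.

Lemma outcome_prob_ge0 n s (w : n.-tuple bool) :
  valid_strategy s -> 0 <= outcome_prob s w.
Proof.
move=> hs; apply: prodr_ge0 => i _; have /andP[p_ge0 p_le1] := hs (take i w).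
by case: ifP; rewrite /round_prob ?subr_ge0.
Qed.

Lemma outcome_prob_sum1 n s :
  valid_strategy s -> \sum_(w : n.-tuple bool) outcome_prob s w = 1.
Proof.
elim: n s => [|n IHn] s hs.
  rewrite (big_pred1 [tuple]) ?/outcome_prob ?big_ord0 // => w.
  by apply/esym/eqP/val_inj; case: w => [[]].
rewrite big_tuple_cons big_bool /=.
under eq_bigr do rewrite outcome_prob_cons.
under [X in _ + X]eq_bigr do rewrite outcome_prob_cons.
rewrite -!mulr_sumr !IHn ?mulr1 ?subrKC //; exact: valid_strategy_after.
Qed.

Lemma prob_Y_gt_le1 n s q : valid_strategy s -> prob_Y_gt n s q <= 1.
Proof.
move=> hs; rewrite -(outcome_prob_sum1 n _ hs) [leRHS](bigID (fun w => q < Yval s w)).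
by rewrite lerDl sumr_ge0 // => w _; apply: outcome_prob_ge0.
Qed.

Lemma prob_Y_gt_lt0 n s q :
  valid_strategy s -> q < 0 -> prob_Y_gt n s q <= expR (- q).
Proof.
move=> hs q_lt0; apply: le_trans (prob_Y_gt_le1 n s q hs) (le_trans _ (expR_ge1Dx _)).
by rewrite lerDl oppr_ge0 ltW.
Qed.

Lemma prob_Y_gt0 s q : 0 <= q -> prob_Y_gt 0 s q = 0.
Proof. by move=> q_ge0; rewrite /prob_Y_gt big1 // => w; rewrite /Yval big_ord0 ltNge q_ge0. Qed.

Lemma prob_Y_gt_cons n s q : 0 <= q ->
  prob_Y_gt n.+1 s q = (1 - s [::]) * prob_Y_gt n (strategy_after s false) (q - s [::]).
Proof.
move=> q_ge0; rewrite /prob_Y_gt big_mkcond big_tuple_cons big_bool /=.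
rewrite big1 ?add0r => [|w _]; last by rewrite Yval_cons ltNge q_ge0.
rewrite mulr_sumr [RHS]big_mkcond; apply: eq_bigr => w _.
by rewrite Yval_cons outcome_prob_cons ltrBlDl; case: ifP; rewrite ?mulr0.
Qed.

End Adversary.

Theorem mainTheorem14 (R : realType) (n : nat) (s : strategy R)
  (hs : valid_strategy s) (q : R) :
  prob_Y_gt n s q <= expR (- q).
Proof.
elim: n s hs q => [|n IHn] s hs q; have [q_lt0|q_ge0] := ltP q 0;
  try exact: prob_Y_gt_lt0.
- by rewrite prob_Y_gt0 ?expR_ge0.
- have /andP[p_ge0 p_le1] := hs [::].
  rewrite prob_Y_gt_cons //.
  apply: le_trans (ler_wpM2l _ (IHn _ (valid_strategy_after _ false hs) _)) _.
    by rewrite subr_ge0.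
  rewrite opprB expRD mulrA -[leRHS]mul1r.
  rewrite ler_wpM2r ?expR_ge0 //.
  exact: mul1B_expR_le1.
Qed.
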